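(* Let $g:M^{3\times3}\times M^{3\times3}\times[0,\infty)\to(-\infty,\infty]$ be convex, real-valued on $M^{3\times3}\times M^{3\times3}\times(0,\infty)$, and satisfy $g(RA,RH,\delta)=g(A,H,\delta)$ for all $R\in SO(3)$, $A,H\in M^{3\times3}$, $\delta\ge0$. Suppose $\psi(A):=g(A,\operatorname{cof}A,\det A)$, $A\in M^{3\times3}_+$, satisfies $\psi(A_j)\to\infty$ for every sequence $A_j\in M^{3\times3}_+$ with $\det A_j\to0+$. Then the set $\{(A,H)\in M^{3\times3}\times M^{3\times3}: g(A,H,0)<\infty\}$ has empty interior.
   Context: $M^{3\times3}$ is the space of real $3\times3$ matrices, $M^{3\times3}_+=\{A:\det A>0\}$, $\operatorname{cof}A$ is the cofactor matrix of $A$, $SO(3)$ is the rotation group. *)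

From HB Require Import structures.
From mathcomp Require Import all_boot all_order all_algebra.
From mathcomp Require Import all_classical all_reals all_analysis.
Set Implicit Arguments. Unset Strict Implicit. Unset Printing Implicit Defensive.
Import Order.TTheory GRing.Theory Num.Theory.
Import numFieldNormedType.Exports.
Local Open Scope classical_set_scope.
Local Open Scope ring_scope.

Definition cof (R : comNzRingType) (A : 'M[R]_3) : 'M[R]_3 :=
  \matrix_(i, j) cofactor A i j.

Definition SO3 (R : comNzRingType) (Q : 'M[R]_3) : Prop :=
  Q^T *m Q = 1%:M /\ \det Q = 1.

Definition convex_g (R : realType) (g : 'M[R]_3 -> 'M[R]_3 -> R -> \bar R) : Prop :=
  forall (A1 H1 A2 H2 : 'M[R]_3) (d1 d2 t : R),
    0 <= d1 -> 0 <= d2 -> 0 <= t <= 1 ->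
    let A := t *: A1 + (1 - t) *: A2 in
    let H := t *: H1 + (1 - t) *: H2 in
    let d := t * d1 + (1 - t) * d2 in
    (g A H d <= t%:E * g A1 H1 d1 + (1 - t)%:E * g A2 H2 d2)%E.

From HB Require Import structures.
From mathcomp Require Import all_boot all_order all_algebra.
From mathcomp Require Import all_classical all_reals all_analysis.
From mathcomp Require Import ring lra.
Set Implicit Arguments. Unset Strict Implicit. Unset Printing Implicit Defensive.
Import Order.TTheory GRing.Theory Num.Theory.
Import numFieldNormedType.Exports.
Local Open Scope classical_set_scope.
Local Open Scope ring_scope.

(* Suppose (A0, H0) lies in the interior of the effective domain of g(., ., 0).
   Frame indifference under the four sign rotations Q = diag(+-1, +-1, +-1),
   whose sum is 0, together with convexity, lets us average away (A0, H0): for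
   some e > 0 the point (diag(0,e,e), diag(e^2,0,0), 0) has g < +oo.  That point
   is (A, cof A, det A) for A = diag(0,e,e), and along the segment
   A_s = diag(s,e,e), 0 < s <= 1, the triple (A_s, cof A_s, det A_s) is affine
   in s.  By convexity psi(A_s) stays below the max of its values at the two
   endpoints while det A_s -> 0+, contradicting the blow-up of psi. *)

Section DiagonalMatrices.
Variable R : comNzRingType.

Definition diag3 (a b c : R) : 'M[R]_3 := diag_mx (\row_i [:: a; b; c]`_i).

Lemma diag3D a b c a' b' c' :
  diag3 a b c + diag3 a' b' c' = diag3 (a + a') (b + b') (c + c').
Proof.
by rewrite -linearD; congr diag_mx; apply/rowP => -[[|[|[|?]]] ?]; rewrite !mxE.
Qed.

Lemma diag3Z k a b c : k *: diag3 a b c = diag3 (k * a) (k * b) (k * c).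
Proof.
by rewrite -linearZ; congr diag_mx; apply/rowP => -[[|[|[|?]]] ?]; rewrite !mxE.
Qed.

Lemma mul_diag3 a b c a' b' c' :
  diag3 a b c *m diag3 a' b' c' = diag3 (a * a') (b * b') (c * c').
Proof.
rewrite mul_diag_mx; apply/matrixP => -[[|[|[|?]]] ?] -[[|[|[|?]]] ?];
  by rewrite !mxE /= ?mulr0n ?mulr1n ?mulr0.
Qed.

Lemma diag3_const k : diag3 k k k = k%:M.
Proof. by apply/matrixP => -[[|[|[|?]]] ?] -[[|[|[|?]]] ?]; rewrite !mxE. Qed.

Lemma det_diag3 a b c : \det (diag3 a b c) = a * b * c.
Proof. by rewrite det_diag !big_ord_recr big_ord0 /= !mxE mul1r. Qed.

Lemma tr_diag3 a b c : (diag3 a b c)^T = diag3 a b c.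
Proof. exact: tr_diag_mx. Qed.

Lemma cof_adj (A : 'M[R]_3) : cof A = (\adj A)^T.
Proof. by apply/matrixP => i j; rewrite !mxE. Qed.

End DiagonalMatrices.

Lemma cof_diag3 (F : fieldType) (a b c : F) : a != 0 -> b != 0 -> c != 0 ->
  cof (diag3 a b c) = diag3 (b * c) (a * c) (a * b).
Proof.
move=> a0 b0 c0; have Du : diag3 a b c \in unitmx.
  by rewrite unitmxE det_diag3 unitfE !mulf_neq0.
rewrite cof_adj -[\adj _](mulKmx Du) mul_mx_adj -[in RHS](tr_diag3 (b * c)).
rewrite -[diag3 (b * c) _ _](mulKmx Du) mul_diag3 det_diag3 -diag3_const.
by congr (_ *m _)^T; congr diag3; ring.
Qed.

Section SignRotations.
Variables (R : comNzRingType) (a b c : R).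
Hypotheses (a2 : a * a = 1) (b2 : b * b = 1) (c2 : c * c = 1).

Lemma diag3_sign_involutive : diag3 a b c *m diag3 a b c = 1.
Proof. by rewrite mul_diag3 a2 b2 c2 diag3_const. Qed.

Lemma SO3_diag3_sign : a * b * c = 1 -> SO3 (diag3 a b c).
Proof. by move=> abc; rewrite /SO3 tr_diag3 diag3_sign_involutive det_diag3. Qed.

End SignRotations.

Lemma convex_comb_le_max (R : realDomainType) (t x y : R) :
  0 <= t <= 1 -> t * x + (1 - t) * y <= Num.max x y.
Proof.
move=> /andP[t0 t1]; have xm : x <= Num.max x y by rewrite le_max lexx.
have ym : y <= Num.max x y by rewrite le_max lexx orbT.
nra.
Qed.

Section ConvexIntegrand.
Variables (R : realType) (g : 'M[R]_3 -> 'M[R]_3 -> R -> \bar R).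
Hypothesis g_convex : convex_g g.

Section Segment.
Variables (A1 H1 A2 H2 : 'M[R]_3) (d1 d2 t : R).
Hypotheses (d1_ge0 : 0 <= d1) (d2_ge0 : 0 <= d2) (t01 : 0 <= t <= 1).

Let A := t *: A1 + (1 - t) *: A2.
Let H := t *: H1 + (1 - t) *: H2.
Let d := t * d1 + (1 - t) * d2.

Lemma convex_g_lt_pinfty :
  (g A1 H1 d1 < +oo)%E -> (g A2 H2 d2 < +oo)%E -> (g A H d < +oo)%E.
Proof.
move=> lt1 lt2; have t0 : 0 <= t by case/andP: t01.
have t1 : 0 <= 1 - t by case/andP: t01; rewrite subr_ge0.
apply: le_lt_trans (g_convex A1 H1 A2 H2 d1_ge0 d2_ge0 t01) _.
by apply: lte_add_pinfty; apply: lte_mul_pinfty; rewrite ?lee_fin.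
Qed.

Lemma convex_g_le_max (x y : R) :
  g A1 H1 d1 = x%:E -> g A2 H2 d2 = y%:E -> (g A H d <= (Num.max x y)%:E)%E.
Proof.
move=> gx gy; apply: le_trans (g_convex A1 H1 A2 H2 d1_ge0 d2_ge0 t01) _.
by rewrite gx gy -!EFinM -EFinD lee_fin convex_comb_le_max.
Qed.

End Segment.

Lemma convex_g_average4 (X1 X2 X3 X4 Y1 Y2 Y3 Y4 S T : 'M[R]_3) :
  X1 + X2 + X3 + X4 = 0 -> Y1 + Y2 + Y3 + Y4 = 0 ->
  (g (X1 + S) (Y1 + T) 0 < +oo)%E -> (g (X2 + S) (Y2 + T) 0 < +oo)%E ->
  (g (X3 + S) (Y3 + T) 0 < +oo)%E -> (g (X4 + S) (Y4 + T) 0 < +oo)%E ->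
  (g S T 0 < +oo)%E.
Proof.
move=> sumX sumY lt1 lt2 lt3 lt4.
have average (P1 P2 P3 P4 M : 'M[R]_3) : P1 + P2 + P3 + P4 = 0 ->
    2^-1 *: (2^-1 *: (P1 + M) + (1 - 2^-1) *: (P2 + M)) +
    (1 - 2^-1) *: (2^-1 *: (P3 + M) + (1 - 2^-1) *: (P4 + M)) = M.
  move=> /matrixP sumP; apply/matrixP => i j; have := sumP i j; rewrite !mxE.
  lra.
have half : 0 <= (2^-1 : R) <= 1 by apply/andP; split; lra.
have midpoint P1 Q1 P2 Q2 : (g P1 Q1 0 < +oo)%E -> (g P2 Q2 0 < +oo)%E ->
    (g (2^-1 *: P1 + (1 - 2^-1) *: P2) (2^-1 *: Q1 + (1 - 2^-1) *: Q2) 0 < +oo)%E.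
  by move=> ltP ltQ; have := convex_g_lt_pinfty (lexx 0) (lexx 0) half ltP ltQ;
    rewrite !mulr0 addr0.
by have := midpoint _ _ _ _ (midpoint _ _ _ _ lt1 lt2) (midpoint _ _ _ _ lt3 lt4);
  rewrite !average.
Qed.

End ConvexIntegrand.

Lemma interior_near_right (R : numFieldType) (V1 V2 : normedModType R)
    (U : set (V1 * V2)) (A : V1) (H : V2) (X : V1) (Y : V2) :
  U° (A, H) -> \forall e \near 0^'+, U (A + e *: X, H + (e * e) *: Y).
Proof.
move=> UAH; have e_to0 := @cvg_id _ (nbhs (0 : R)).
have shiftA : A + e *: X @[e --> (0 : R)] --> A.
  apply: cvg_trans (cvgD (cvg_cst A) (cvgZ e_to0 (cvg_cst X))) _.
  by rewrite scale0r addr0.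
have shiftH : H + (e * e) *: Y @[e --> (0 : R)] --> H.
  apply: cvg_trans (cvgD (cvg_cst H) (cvgZ (cvgM e_to0 e_to0) (cvg_cst Y))) _.
  by rewrite mulr0 scale0r addr0.
have shift : (A + e *: X, H + (e * e) *: Y) @[e --> (0 : R)] --> (A, H).
  exact: cvg_pair shiftA shiftH.
exact: cvg_at_right_filter shift _ UAH.
Qed.

Section DegenerateDiagonal.
Variables (R : realType) (g : 'M[R]_3 -> 'M[R]_3 -> R -> \bar R).
Hypothesis g_convex : convex_g g.

Lemma sum_sign_diag3 :
  diag3 1 1 1 + diag3 1 (-1) (-1) + diag3 (-1) 1 (-1) + diag3 (-1) (-1) 1 = 0 :> 'M[R]_3.
Proof. by rewrite !diag3D -(scale0r (diag3 (1 : R) 1 1)) diag3Z; congr diag3; ring. Qed.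

Lemma interior_dom0_diag3 (A0 H0 : 'M[R]_3) :
  (forall Q A H d, SO3 Q -> 0 <= d -> g (Q *m A) (Q *m H) d = g A H d) ->
  [set p | (g p.1 p.2 0 < +oo)%E]° (A0, H0) ->
  exists2 e : R, 0 < e & (g (diag3 0 e e) (diag3 (e * e) 0 0) 0 < +oo)%E.
Proof.
move=> g_frame; set U := [set p | _] => AH0.
pose shifted Q e := (A0 + e *: (Q *m diag3 0 1 1), H0 + (e * e) *: (Q *m diag3 1 0 0)).
set Q0 : 'M[R]_3 := diag3 1 1 1; set Q1 : 'M[R]_3 := diag3 1 (-1) (-1).
set Q2 : 'M[R]_3 := diag3 (-1) 1 (-1); set Q3 : 'M[R]_3 := diag3 (-1) (-1) 1.
have near_U Q := interior_near_right (Q *m diag3 0 1 1) (Q *m diag3 1 0 0) AH0.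
have [e [e0 [U0 [U1 [U2 U3]]]]] := filter_ex (filterI (nbhs_right_gt 0)
  (filterI (near_U Q0) (filterI (near_U Q1) (filterI (near_U Q2) (near_U Q3))))).
exists e => //.
(* Applying Q = Q^-1 turns the shifts along Q D and Q E into shifts along
   D = diag(0,1,1) and E = diag(1,0,0) themselves. *)
have unshift a b c : a * a = 1 -> b * b = 1 -> c * c = 1 -> a * b * c = 1 ->
    U (shifted (diag3 a b c) e) ->
    (g (diag3 a b c *m A0 + diag3 0 e e) (diag3 a b c *m H0 + diag3 (e * e) 0 0) 0
       < +oo)%E.
  move=> a2 b2 c2 abc; rewrite /U /shifted /= -(g_frame _ _ _ _ (SO3_diag3_sign a2 b2 c2 abc)) //.
  rewrite !mulmxDr -!scalemxAr !mulmxA diag3_sign_involutive // !mul1mx !diag3Z.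
  by rewrite !mulr0 !mulr1.
have sum_mulmx (B : 'M[R]_3) : Q0 *m B + Q1 *m B + Q2 *m B + Q3 *m B = 0.
  by rewrite -!mulmxDl sum_sign_diag3 mul0mx.
apply: (convex_g_average4 g_convex (sum_mulmx A0) (sum_mulmx H0)).
- by apply: (unshift 1 1 1) U0; ring.
- by apply: (unshift 1 (-1) (-1)) U1; ring.
- by apply: (unshift (-1) 1 (-1)) U2; ring.
- by apply: (unshift (-1) (-1) 1) U3; ring.
Qed.

Lemma diag3_degenerate_not_fin_num (e : R) :
  (forall A H d, 0 < d -> g A H d \is a fin_num) ->
  (forall u : nat -> 'M[R]_3, (forall j, 0 < \det (u j)) ->
     (fun j => \det (u j)) @ \oo --> 0 ->
     (fun j => g (u j) (cof (u j)) (\det (u j))) @ \oo --> +oo%E) ->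
  0 < e -> g (diag3 0 e e) (diag3 (e * e) 0 0) 0 \isn't a fin_num.
Proof.
move=> g_fin g_blowup e0; apply/negP => fin0.
have fin1 : g (diag3 1 e e) (diag3 (e * e) e e) (e * e) \is a fin_num.
  by apply: g_fin; rewrite mulr_gt0.
set M := Num.max (fine (g (diag3 1 e e) (diag3 (e * e) e e) (e * e)))
                 (fine (g (diag3 0 e e) (diag3 (e * e) 0 0) 0)).
pose u j := diag3 (harmonic j) e e.
have det_u j : \det (u j) = harmonic j * (e * e) by rewrite det_diag3; ring.
have det_u_gt0 j : 0 < \det (u j) by rewrite det_u !mulr_gt0 ?harmonic_gt0.
have det_u_to0 : (fun j => \det (u j)) @ \oo --> 0.
  rewrite (funext det_u); apply: cvg_trans (cvgM cvg_harmonic (cvg_cst _)) _.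
  by rewrite mul0r.
have psi_u_le j : (g (u j) (cof (u j)) (\det (u j)) <= M%:E)%E.
  have s01 : 0 <= (harmonic j : R) <= 1.
    by rewrite harmonic_ge0 /= invf_le1 ?ler1n.
  set s := harmonic j in s01 *.
  rewrite /u cof_diag3 ?gt_eqF ?harmonic_gt0 // det_diag3.
  have -> : diag3 s e e = s *: diag3 1 e e + (1 - s) *: diag3 0 e e.
    by rewrite !diag3Z diag3D; congr diag3; ring.
  have -> : diag3 (e * e) (s * e) (s * e) =
      s *: diag3 (e * e) e e + (1 - s) *: diag3 (e * e) 0 0.
    by rewrite !diag3Z diag3D; congr diag3; ring.
  have -> : s * e * e = s * (e * e) + (1 - s) * 0 by ring.
  by apply: (convex_g_le_max g_convex); rewrite ?fineK // mulr_ge0 ?ltW.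
have /cvgeyPge /(_ (M + 1)) /filter_ex [k] := g_blowup u det_u_gt0 det_u_to0.
by move=> /le_trans /(_ (psi_u_le k)); rewrite lee_fin; lra.
Qed.

End DegenerateDiagonal.

Theorem mainTheorem17 (R : realType) (g : 'M[R]_3 -> 'M[R]_3 -> R -> \bar R) :
  (forall A H d, 0 <= d -> g A H d != -oo%E) ->
  convex_g g ->
  (forall A H d, 0 < d -> g A H d \is a fin_num) ->
  (forall Q A H d, SO3 Q -> 0 <= d -> g (Q *m A) (Q *m H) d = g A H d) ->
  (forall u : nat -> 'M[R]_3, (forall j, 0 < \det (u j)) ->
     (fun j => \det (u j)) @ \oo --> 0 ->
     (fun j => g (u j) (cof (u j)) (\det (u j))) @ \oo --> +oo%E) ->
  interior [set p : 'M[R]_3 * 'M[R]_3 | (g p.1 p.2 0%R < +oo)%E] = set0.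
Proof.
move=> g_ninfty g_convex g_fin g_frame g_blowup.
apply/seteqP; split=> // -[A0 H0] /(interior_dom0_diag3 g_convex g_frame) [e e0 lt_oo].
have := diag3_degenerate_not_fin_num g_convex g_fin g_blowup e0.
by rewrite fin_numE g_ninfty // lt_eqF.
Qed.
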